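(* Let $(X,T)$ be a topological dynamical system and $\mathscr U$ an open cover of $X$. Let $\lambda_c$ be a symmetric probability measure on $[0,1]$ and let $c_S^n=\int_{[0,1]}x^{|S|}(1-x)^{n-|S|}\lambda_c(dx)$ for $S\subset n^*$. Define $b_n=\sum_{S\subset n^*}c_S^n\log N(\mathscr U_S)$. Then $b_{n+m}\le b_n+b_m$ for all $n,m\in\mathbb N$.
   Context: $(X,T)$: compact Hausdorff space with continuous map. $n^*=\{0,\dots,n-1\}$; $\mathscr U_S=\bigvee_{i\in S}T^{-i}\mathscr U$ (with $\mathscr U_\emptyset=\{X\}$); $N(\cdot)$ minimal cardinality of a subcover. A probability measure $\lambda$ on $[0,1]$ is symmetric if $\int f(x)\lambda(dx)=\int f(1-x)\lambda(dx)$ for all bounded measurable $f$. *)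

From HB Require Import structures.
From mathcomp Require Import all_boot all_order all_algebra.
From mathcomp Require Import all_classical all_reals all_analysis.
Set Implicit Arguments. Unset Strict Implicit. Unset Printing Implicit Defensive.
Import Order.TTheory GRing.Theory Num.Theory.
Local Open Scope classical_set_scope.
Local Open Scope ring_scope.

Definition coverable_by {X : Type} (V : set (set X)) (k : nat) : Prop :=
  exists F : 'I_k -> set X, (forall i, V (F i)) /\ \bigcup_i F i = setT.

(* N(V): minimal cardinality of a subcover of V (0 if no finite subcover,
   which never happens for open covers of a compact space). *)
Definition covN {X : Type} (V : set (set X)) : nat :=
  match pselect (exists k, `[< coverable_by V k >]) with
  | left h => ex_minn h
  | right _ => 0%N
  end.

(* U_S = \bigvee_{i in S} T^{-i} U, for S a subset of n^* = {0,..,n-1};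
   U_emptyset = {X}. *)
Definition joinS {X : Type} (T : X -> X) (U : set (set X)) (n : nat)
    (S : {set 'I_n}) : set (set X) :=
  [set A | exists g : 'I_n -> set X,
     (forall i, i \in S -> U (g i)) /\
     A = \bigcap_(i in [set i | i \in S]) ((iter (nat_of_ord i) T) @^-1` (g i))].

Definition cS {R : realType} (lam : probability R R) (n : nat)
    (S : {set 'I_n}) : R :=
  fine (\int[lam]_(x in `[0%R, 1%R]) ((x ^+ #|S| * (1 - x) ^+ (n - #|S|))%R)%:E)%E.

Definition bn {R : realType} {X : Type} (T : X -> X) (U : set (set X))
    (lam : probability R R) (n : nat) : R :=
  \sum_(S : {set 'I_n}) cS lam S * ln ((covN (joinS T U S))%:R).

Definition symmetric01 {R : realType} (lam : probability R R) : Prop :=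
  forall f : R -> R, measurable_fun (`[0%R, 1%R] : set R) f ->
    (exists M : R, forall x, x \in `[0%R, 1%R] -> `|f x| <= M) ->
    (\int[lam]_(x in `[0%R, 1%R]) (f x)%:E =
     \int[lam]_(x in `[0%R, 1%R]) (f (1 - x))%:E)%E.

From HB Require Import structures.
From mathcomp Require Import all_boot all_order all_algebra.
From mathcomp Require Import all_classical all_reals all_analysis.
From mathcomp Require Import measurable_realfun.
Import Order.TTheory GRing.Theory Num.Theory.
Local Open Scope classical_set_scope.
Local Open Scope ring_scope.
Set Implicit Arguments. Unset Strict Implicit.

(* c_S^n is the lambda-average of the probability that n independent coins of
   bias x land heads exactly on S.  Write S subset (n+m)^* as S1 + (n + S2)
   with S1 subset n^*, S2 subset m^*.  The probability factors over the two
   blocks of coins, so summing c_S^(n+m) over S2 gives c_(S1)^n, and summing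
   over S1 gives c_(S2)^m.  On the other hand U_S contains A `&` T^-n B for
   all A in U_(S1) and B in U_(S2), so N(U_S) <= N(U_(S1)) N(U_(S2)); taking
   logarithms and summing against the weights gives b_(n+m) <= b_n + b_m. *)

Section SplitSet.
Variables n m : nat.

Definition catset (S1 : {set 'I_n}) (S2 : {set 'I_m}) : {set 'I_(n + m)} :=
  [set k | match fintype.split k with inl i => i \in S1 | inr j => j \in S2 end]%SET.

Definition lset (S : {set 'I_(n + m)}) : {set 'I_n} :=
  [set i | lshift m i \in S]%SET.

Definition rset (S : {set 'I_(n + m)}) : {set 'I_m} :=
  [set j | rshift n j \in S]%SET.

Lemma catsetKl S1 S2 : lset (catset S1 S2) = S1.
Proof. by apply/setP => i; rewrite !inE (unsplitK (inl i)). Qed.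

Lemma catsetKr S1 S2 : rset (catset S1 S2) = S2.
Proof. by apply/setP => j; rewrite !inE (unsplitK (inr j)). Qed.

Lemma catset_lrset S : catset (lset S) (rset S) = S.
Proof.
apply/setP => k; rewrite inE; case: splitP => j Hk; rewrite inE;
  by congr (_ \in S); apply: val_inj.
Qed.

Lemma big_catset (V : nmodType) (F : {set 'I_(n + m)} -> V) :
  \sum_(S : {set 'I_(n + m)}) F S =
  \sum_(S1 : {set 'I_n}) \sum_(S2 : {set 'I_m}) F (catset S1 S2).
Proof.
rewrite pair_big /= (reindex (fun p => catset p.1 p.2)) //=.
exists (fun S => (lset S, rset S)) => [[S1 S2] _ | S _] /=.
  by rewrite catsetKl catsetKr.
by rewrite catset_lrset.
Qed.

End SplitSet.

Section CoinWeight.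
Variable R : comNzRingType.

Definition coin_weight n (S : {set 'I_n}) (x : R) : R :=
  \prod_(i < n) (if i \in S then x else 1 - x).

Lemma coin_weightE n (S : {set 'I_n}) x :
  coin_weight S x = x ^+ #|S| * (1 - x) ^+ (n - #|S|).
Proof.
rewrite /coin_weight (bigID (mem S)) /=.
rewrite (eq_bigr (fun _ => x)); last by move=> i ->.
rewrite [X in _ * X](eq_bigr (fun _ => 1 - x)); last by move=> i /negbTE ->.
rewrite !prodr_const; congr (_ * _ ^+ _).
by rewrite -[n in (n - _)%N](card_ord n) -(cardC S) addKn.
Qed.

Lemma sum_coin_weight n x : \sum_(S : {set 'I_n}) coin_weight S x = 1.
Proof.
have -> : 1 = \prod_(i < n) \sum_(b : bool) (if b then x else 1 - x).
  by rewrite big1 // => i _; rewrite big_bool /= addrC subrK.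
rewrite bigA_distr_bigA /= (reindex (fun S : {set 'I_n} => [ffun i => i \in S])).
  by apply: eq_bigr => S _; apply: eq_bigr => i _; rewrite ffunE.
exists (fun f : {ffun 'I_n -> bool} => [set i | f i]%SET) => [S _ | f _].
  by apply/setP => i; rewrite inE ffunE.
by apply/ffunP => i; rewrite ffunE inE.
Qed.

Lemma coin_weight_catset n m (S1 : {set 'I_n}) (S2 : {set 'I_m}) x :
  coin_weight (catset S1 S2) x = coin_weight S1 x * coin_weight S2 x.
Proof.
rewrite /coin_weight big_split_ord; congr (_ * _); apply: eq_bigr => i _.
  by rewrite inE (unsplitK (inl i : 'I_n + 'I_m)).
by rewrite inE (unsplitK (inr i : 'I_n + 'I_m)).
Qed.

End CoinWeight.

Section CoinWeightBounds.
Variable R : numDomainType.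

Lemma coin_weight_ge0 n (S : {set 'I_n}) (x : R) : 0 <= x <= 1 ->
  0 <= coin_weight S x.
Proof.
move=> /andP[x0 x1]; apply: prodr_ge0 => i _.
by case: ifP => _ //; rewrite subr_ge0.
Qed.

Lemma coin_weight_le1 n (S : {set 'I_n}) (x : R) : 0 <= x <= 1 ->
  coin_weight S x <= 1.
Proof.
move=> /andP[x0 x1]; apply: prodr_ile1 => i _.
by case: ifP => _; rewrite ?x0 ?x1 // subr_ge0 x1 /= gerBl.
Qed.

End CoinWeightBounds.

Lemma Rintegral_sum (R : realType) d (T : measurableType d)
    (mu : {measure set T -> \bar R}) (D : set T) (I : finType) (f : I -> T -> R) :
  measurable D -> (forall i, mu.-integrable D (EFin \o f i)) ->
  \int[mu]_(x in D) (\sum_i f i x) = \sum_i \int[mu]_(x in D) f i x.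
Proof.
move=> mD fi; rewrite /Rintegral.
under eq_integral do rewrite -sumEFin.
rewrite (integral_sum mD (f := fun i x => (f i x)%:E) fi).
under eq_bigr => i _ do rewrite -(fineK (integrable_fin_num mD (fi i))).
by rewrite sumEFin.
Qed.

Section Weights.
Variables (R : realType) (lam : probability R R).
Local Notation I01 := (`[0%R, 1%R]%classic : set R).

Lemma cSE n (S : {set 'I_n}) :
  cS lam S = \int[lam]_(x in `[0%R, 1%R]) coin_weight S x.
Proof. by congr fine; apply: eq_integral => x _; rewrite coin_weightE. Qed.

Lemma coin_weight_integrable n (S : {set 'I_n}) :
  lam.-integrable I01 (EFin \o coin_weight S).
Proof.
apply: (measurable_bounded_integrable (measurable_itv _)).
- by rewrite (le_lt_trans (probability_le1 _ (measurable_itv _))) ?ltry.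
- rewrite (_ : coin_weight S = fun x => x ^+ #|S| * (1 - x) ^+ (n - #|S|)).
    by apply: measurable_funM => //; apply: measurable_funX; exact: measurable_funB.
  by apply/funext => x; rewrite coin_weightE.
- exists 1; split => // M M1 x /= x01; rewrite in_itv /= in x01.
  by rewrite ger0_norm ?coin_weight_ge0 // (le_trans (coin_weight_le1 _ x01)) ?ltW.
Qed.

Lemma cS_ge0 n (S : {set 'I_n}) : 0 <= cS lam S.
Proof.
rewrite cSE; apply: Rintegral_ge0 => x; rewrite /= in_itv /=.
exact: coin_weight_ge0.
Qed.

Lemma sum_cS_catsetr n m (S1 : {set 'I_n}) :
  \sum_(S2 : {set 'I_m}) cS lam (catset S1 S2) = cS lam S1.
Proof.
under eq_bigr do rewrite cSE.
rewrite -Rintegral_sum //; last by move=> S2; exact: coin_weight_integrable.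
rewrite cSE; apply: eq_Rintegral => x _.
by under eq_bigr do rewrite coin_weight_catset; rewrite -mulr_sumr sum_coin_weight mulr1.
Qed.

Lemma sum_cS_catsetl n m (S2 : {set 'I_m}) :
  \sum_(S1 : {set 'I_n}) cS lam (catset S1 S2) = cS lam S2.
Proof.
under eq_bigr do rewrite cSE.
rewrite -Rintegral_sum //; last by move=> S1; exact: coin_weight_integrable.
rewrite cSE; apply: eq_Rintegral => x _.
by under eq_bigr do rewrite coin_weight_catset; rewrite -mulr_suml sum_coin_weight mul1r.
Qed.

Lemma sum_cS_lrset n m (f : {set 'I_n} -> R) (g : {set 'I_m} -> R) :
  \sum_(S : {set 'I_(n + m)}) cS lam S * (f (lset S) + g (rset S)) =
  \sum_(S1 : {set 'I_n}) cS lam S1 * f S1 + \sum_(S2 : {set 'I_m}) cS lam S2 * g S2.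
Proof.
rewrite big_catset.
under eq_bigr do under eq_bigr do rewrite catsetKl catsetKr mulrDr.
under eq_bigr do rewrite big_split /=.
rewrite big_split /= [X in _ + X]exchange_big /=; congr (_ + _).
  by apply: eq_bigr => S1 _; rewrite -mulr_suml sum_cS_catsetr.
by apply: eq_bigr => S2 _; rewrite -mulr_suml sum_cS_catsetl.
Qed.

End Weights.

Section Covers.
Variable X : Type.

Lemma covN_le (V : set (set X)) k : coverable_by V k -> (covN V <= k)%N.
Proof.
move=> Vk; rewrite /covN; case: pselect => [h | []]; last by exists k; apply/asboolP.
by case: ex_minnP => k' _; apply; apply/asboolP.
Qed.

Lemma coverable_covN (V : set (set X)) k :
  coverable_by V k -> coverable_by V (covN V).
Proof.
move=> Vk; rewrite /covN; case: pselect => [h | []]; last by exists k; apply/asboolP.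
by case: ex_minnP => k' /asboolP.
Qed.

Lemma coverable_by_fin (I : finType) (V : set (set X)) (F : I -> set X) :
  (forall i, V (F i)) -> \bigcup_i F i = setT -> coverable_by V #|I|.
Proof.
move=> FV FT; exists (fun i => F (enum_val i)); split => //.
apply/seteqP; split => // x _.
have [i _ Fx] : (\bigcup_i F i) x by rewrite FT.
by exists (enum_rank i) => //; rewrite enum_rankK.
Qed.

Variables (T : X -> X) (U : set (set X)).

Lemma joinS_catset n m (S : {set 'I_(n + m)}) A B :
  joinS T U (lset S) A -> joinS T U (rset S) B ->
  joinS T U S (A `&` iter n T @^-1` B).
Proof.
move=> [g1 [g1U ->]] [g2 [g2U ->]].
pose g k := match fintype.split k with inl i => g1 i | inr j => g2 j end.
exists g; split.
  move=> k kS; rewrite /g; case: splitP => j Hk.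
    by apply: g1U; rewrite inE (_ : lshift m j = k) //; apply: val_inj.
  by apply: g2U; rewrite inE (_ : rshift n j = k) //; apply: val_inj.
apply/seteqP; split => x /=.
  move=> [H1 H2] k /= kS; rewrite /g; case: splitP => j Hk.
    by rewrite Hk; apply: H1; rewrite /= inE (_ : lshift m j = k) //; apply: val_inj.
  rewrite Hk addnC iterD; apply: H2.
  by rewrite /= inE (_ : rshift n j = k) //; apply: val_inj.
move=> H; split => [i | j]; rewrite /= inE => /H; rewrite /g.
  by rewrite (unsplitK (inl i : 'I_n + 'I_m)).
by rewrite (unsplitK (inr j : 'I_n + 'I_m)) /= addnC iterD.
Qed.

Lemma coverable_joinS_catset n m (S : {set 'I_(n + m)}) k1 k2 :
  coverable_by (joinS T U (lset S)) k1 -> coverable_by (joinS T U (rset S)) k2 ->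
  coverable_by (joinS T U S) (k1 * k2).
Proof.
move=> [F1 [F1V F1T]] [F2 [F2V F2T]].
rewrite -[k1 in (k1 * _)%N]card_ord -[k2 in (_ * k2)%N]card_ord -card_prod.
apply: (coverable_by_fin (F := fun p => F1 p.1 `&` iter n T @^-1` F2 p.2)).
  by move=> p; apply: joinS_catset.
apply/seteqP; split => // x _.
have [a _ F1x] : (\bigcup_i F1 i) x by rewrite F1T.
have [b _ F2x] : (\bigcup_i F2 i) (iter n T x) by rewrite F2T.
by exists (a, b).
Qed.

Lemma covN_joinS_catset n m (S : {set 'I_(n + m)}) :
  (exists k, coverable_by (joinS T U (lset S)) k) ->
  (exists k, coverable_by (joinS T U (rset S)) k) ->
  (covN (joinS T U S) <= covN (joinS T U (lset S)) * covN (joinS T U (rset S)))%N.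
Proof.
move=> [k1 /coverable_covN H1] [k2 /coverable_covN H2].
exact/covN_le/coverable_joinS_catset.
Qed.

Lemma joinS_cover n (S : {set 'I_n}) : \bigcup_(A in U) A = setT ->
  [set: X] `<=` cover (joinS T U S) id.
Proof.
move=> UT x _.
have : forall i : 'I_n, exists B, U B /\ B (iter i T x).
  move=> i; have [B UB HB] : (\bigcup_(A in U) A) (iter i T x) by rewrite UT.
  by exists B.
move=> /choice [g gU].
exists (\bigcap_(i in [set i | i \in S]) iter i T @^-1` g i).
  by exists g; split => // i _; case: (gU i).
by move=> i _; case: (gU i).
Qed.

End Covers.

(* [compact_cover] needs a pointed space: a nonempty space is pointed by any of
   its points. *)
Definition pointed_at (X : topologicalType) (x0 : X) : Type := X.
HB.instance Definition _ (X : topologicalType) (x0 : X) :=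
  Topological.on (pointed_at x0).
HB.instance Definition _ (X : topologicalType) (x0 : X) :=
  isPointed.Build (pointed_at x0) x0.

Lemma compact_coverable (X : topologicalType) (V : set (set X)) :
  compact [set: X] -> (forall A, V A -> open A) -> [set: X] `<=` cover V id ->
  exists k, coverable_by V k.
Proof.
move=> cX oV VT; have [[x0 _] | X0] := pselect (exists x : X, True); last first.
  exists 0%N, (fun _ => set0); split; first by case.
  by apply/seteqP; split => // x; exfalso; apply: X0; exists x.
have cX0 : compact [set: pointed_at x0] by [].
rewrite compact_cover in cX0; have [D DV DT] := cX0 _ V id oV VT.
pose s := finmap.enum_fset D.
exists (size s), (fun i => nth set0 s i); split.
  by move=> i; have := DV (nth set0 s i); rewrite inE; apply; apply: mem_nth.
apply/seteqP; split => // x _; have [A AD Ax] := DT x I.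
have As : (index A s < size s)%N by rewrite index_mem.
by exists (Ordinal As) => //=; rewrite nth_index.
Qed.

Section JoinCovers.
Variables (X : topologicalType) (T : X -> X) (U : set (set X)).
Hypotheses (cT : continuous T) (oU : forall A, U A -> open A).

Lemma continuous_iter i : continuous (iter i T).
Proof.
elim: i => [|i IH] x /=; first exact: cvg_id.
by apply: continuous_comp; [exact: IH | exact: cT].
Qed.

Lemma joinS_open n (S : {set 'I_n}) A : joinS T U S A -> open A.
Proof.
move=> [g [gU ->]].
have -> : [set i | i \in S] = [set i | (i \in enum 'I_n) && (i \in S)].
  by apply/seteqP; split => i /=; rewrite mem_enum.
rewrite bigcap_seq_cond; apply: big_ind; [exact: openT | exact: openI |].
move=> i iS; apply: open_comp (oU (gU i iS)) => x _.
exact: continuous_iter.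
Qed.

Lemma joinS_coverable n (S : {set 'I_n}) :
  compact [set: X] -> \bigcup_(A in U) A = setT ->
  exists k, coverable_by (joinS T U S) k.
Proof.
move=> cX UT; apply: compact_coverable => //; last exact: joinS_cover.
exact: joinS_open.
Qed.

End JoinCovers.

Lemma ln_nat_ge0 (R : realType) k : 0 <= ln (k%:R : R).
Proof. by case: k => [|k]; [rewrite ln0 | apply: ln_ge0; rewrite ler1n]. Qed.

Lemma ln_natM_le (R : realType) a b c : (a <= b * c)%N ->
  ln (a%:R : R) <= ln (b%:R : R) + ln (c%:R : R).
Proof.
case: a => [|a] abc; first by rewrite ln0 // addr_ge0 // ln_nat_ge0.
have bc_gt0 : (0 < b * c)%N by apply: leq_trans abc.
have [b_gt0 c_gt0] : (0 < b)%N /\ (0 < c)%N by apply/andP; rewrite -muln_gt0.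
by rewrite -lnM ?posrE ?ltr0n // -natrM ler_ln ?posrE ?ltr0n ?ler_nat.
Qed.

Theorem theorem2p8 (R : realType) (X : topologicalType) (T : X -> X)
  (U : set (set X)) (lam : probability R R) :
  compact [set: X] -> hausdorff_space X -> continuous T ->
  (forall A, U A -> open A) -> \bigcup_(A in U) A = setT ->
  lam `[0%R, 1%R]%classic = 1%E -> symmetric01 lam ->
  forall n m : nat, bn T U lam (n + m) <= bn T U lam n + bn T U lam m.
Proof.
move=> cX _ cT oU UT _ _ n m.
have covN_split (S : {set 'I_(n + m)}) :=
  covN_joinS_catset (joinS_coverable cT oU (lset S) cX UT)
                    (joinS_coverable cT oU (rset S) cX UT).
rewrite /bn -sum_cS_lrset; apply: ler_sum => S _.
apply: ler_wpM2l; [exact: cS_ge0 | exact: ln_natM_le].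
Qed.
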